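(* Let $(X,d)$ be a $\delta$-hyperbolic space and $a,b$ isometries of $X$. (i) If there is $x\in X$ with $d(a^px,b^qx)>\max[d(x,a^px),d(x,b^qx)]+2\delta$ for all $(p,q)\in\mathbb Z^*\times\mathbb Z^*$, then the subgroup of $\operatorname{Isom}(X,d)$ generated by $a$ and $b$ is free, freely generated by $a,b$. (ii) If there is $x\in X$ with $d(a^px,b^qx)>\max[d(x,a^px),d(x,b^qx)]+2\delta$ for all $(p,q)\in(\mathbb Z^*\times\mathbb Z^* )\setminus(\mathbb Z^-\times\mathbb Z^-)$, then the semigroup generated by $a$ and $b$ is free.
   Context: $\mathbb Z^*=\mathbb Z\setminus\{0\}$, $\mathbb Z^-$ the negative integers. $\delta$-hyperbolic: geodesic, proper metric space all of whose geodesic triangles are $\delta$-thin in the tripod sense (Gromov products $(y|z)_x=\frac12(d(x,y)+d(x,z)-d(y,z))$; triangle mapped onto its tripod isometrically on each side, points with same image at distance $\le\delta$). A semigroup generated by $\{a,b\}$ is free if distinct nonempty positive words in $a,b$ give distinct elements. *)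

From Stdlib Require Import Reals Lra ZArith List.
Open Scope R_scope.

Set Implicit Arguments.

Section Defs.
Variable X : Type.
Variable d : X -> X -> R.

Definition is_metric : Prop :=
  (forall x y, d x y = 0 <-> x = y) /\
  (forall x y, d x y = d y x) /\
  (forall x y z, d x z <= d x y + d y z).

(** gamma is a geodesic segment from x to y, parametrised by arc length
    on [0, d x y] (values outside this interval are irrelevant). *)
Definition geodesic (gamma : R -> X) (x y : X) : Prop :=
  gamma 0 = x /\ gamma (d x y) = y /\
  forall s t, 0 <= s <= d x y -> 0 <= t <= d x y ->
    d (gamma s) (gamma t) = Rabs (s - t).

Definition geodesic_space : Prop :=
  forall x y, exists gamma, geodesic gamma x y.

(** Proper: closed balls are compact (sequential compactness, metric space). *)
Definition proper_space : Prop :=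
  forall (x : X) (r : R) (u : nat -> X),
    (forall n, d x (u n) <= r) ->
    exists (phi : nat -> nat) (y : X),
      (forall n, (phi n < phi (S n))%nat) /\ d x y <= r /\
      forall eps, eps > 0 -> exists N, forall n, (n >= N)%nat ->
        d (u (phi n)) y < eps.

Definition gromov (x y z : X) : R := (d x y + d x z - d y z) / 2.

(** Geodesic triangle with sides g1 : x -> y, g2 : y -> z, g3 : z -> x is
    delta-thin in the tripod sense: the map to the comparison tripod is
    isometric on each side, and points with the same image (which lie on the
    two sides issuing from a common vertex, at the same distance t from it,
    with t at most the Gromov product at that vertex) are delta-close. *)
Definition thin_triangle (delta : R) (x y z : X) (g1 g2 g3 : R -> X) : Prop :=
  (forall t, 0 <= t <= gromov x y z -> d (g1 t) (g3 (d z x - t)) <= delta) /\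
  (forall t, 0 <= t <= gromov y z x -> d (g2 t) (g1 (d x y - t)) <= delta) /\
  (forall t, 0 <= t <= gromov z x y -> d (g3 t) (g2 (d y z - t)) <= delta).

Definition hyperbolic (delta : R) : Prop :=
  is_metric /\ geodesic_space /\ proper_space /\
  forall x y z g1 g2 g3,
    geodesic g1 x y -> geodesic g2 y z -> geodesic g3 z x ->
    thin_triangle delta x y z g1 g2 g3.

Record isometry := {
  iso_f : X -> X;
  iso_g : X -> X;
  iso_fg : forall x, iso_f (iso_g x) = x;
  iso_gf : forall x, iso_g (iso_f x) = x;
  iso_dist : forall x y, d (iso_f x) (iso_f y) = d x y
}.

Definition zpow (a : isometry) (p : Z) : X -> X :=
  match p with
  | Z0 => fun x => x
  | Zpos n => Nat.iter (Pos.to_nat n) (iso_f a)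
  | Zneg n => Nat.iter (Pos.to_nat n) (iso_g a)
  end.

(** Group words in a, b: letter (gen, inv), gen = true means a,
    inv = true means the inverse letter. *)
Definition letter_map (a b : isometry) (l : bool * bool) : X -> X :=
  let g := if fst l then a else b in
  if snd l then iso_g g else iso_f g.

Definition eval_word (a b : isometry) (w : list (bool * bool)) : X -> X :=
  fold_right (fun (l : bool * bool) (f : X -> X) => fun x => letter_map a b l (f x)) (fun x => x) w.

Fixpoint reduced (w : list (bool * bool)) : Prop :=
  match w with
  | nil => True
  | l :: w' =>
      match w' with
      | nil => True
      | l' :: _ => ~ (fst l = fst l' /\ snd l = negb (snd l'))
      end /\ reduced w'
  end.

Definition freely_generates_group (a b : isometry) : Prop :=
  forall w, w <> nil -> reduced w -> ~ (forall x, eval_word a b w x = x).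

Definition eval_pos_word (a b : isometry) (w : list bool) : X -> X :=
  fold_right (fun (l : bool) (f : X -> X) => fun x => (if l then iso_f a else iso_f b) (f x))
             (fun x => x) w.

Definition free_semigroup (a b : isometry) : Prop :=
  forall w1 w2, w1 <> nil -> w2 <> nil -> w1 <> w2 ->
    ~ (forall x, eval_pos_word a b w1 x = eval_pos_word a b w2 x).

End Defs.

From Stdlib Require Import Reals ZArith List Sorted Lra Lia Bool.
Open Scope R_scope.

(* Ping-pong in a hyperbolic space.  A word in a, b is a product g_1 ... g_k of
   alternating syllables (nonzero powers of a or b); the hypothesis says that
   for consecutive syllables the Gromov product (g_i^-1 x | g_(i+1) x)_x is
   smaller than half of both distances to x by more than delta.  Using the
   four-point condition one shows by induction along the word that
   g_1 ... g_k x lies in the "shadow" (. | g_1 x)_x >= d(x, g_1 x) / 2 of g_1 x,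
   and that it is farther than x from every point z outside that shadow; with
   z = x this shows that the word does not fix x.  For the semigroup, two
   distinct positive words differ after cancelling a common prefix in their
   first letter, and the shadows of a^p x and b^q x are disjoint. *)

Set Implicit Arguments.

Section MetricFacts.
Variables (X : Type) (d : X -> X -> R).
Hypothesis metric : is_metric d.

Lemma dist_sym x y : d x y = d y x.
Proof. exact (proj1 (proj2 metric) x y). Qed.

Lemma dist_triangle x y z : d x z <= d x y + d y z.
Proof. exact (proj2 (proj2 metric) x y z). Qed.

Lemma dist_refl x : d x x = 0.
Proof. now apply (proj1 metric). Qed.

Lemma dist_nonneg x y : 0 <= d x y.
Proof.
  pose proof (dist_triangle x y x). rewrite dist_refl, (dist_sym y x) in H. lra.
Qed.

Lemma gromov_bounds w x y :
  0 <= gromov d w x y /\ gromov d w x y <= d w x /\ gromov d w x y <= d w y.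
Proof.
  unfold gromov.
  pose proof (dist_triangle x w y). pose proof (dist_triangle w x y).
  pose proof (dist_triangle w y x). rewrite (dist_sym x w) in H.
  rewrite (dist_sym y x) in H1. lra.
Qed.

Lemma dist_lt_of_gromov_lt_half x y z :
  gromov d x z y < d x y / 2 -> d z x < d z y.
Proof. unfold gromov. rewrite (dist_sym z x). lra. Qed.

Lemma geodesic_reverse g p q :
  geodesic d g p q -> geodesic d (fun s => g (d p q - s)) q p.
Proof.
  intros [g0 [g1 gd]]. unfold geodesic. rewrite (dist_sym q p). split; [|split].
  - now rewrite Rminus_0_r.
  - now rewrite Rminus_diag.
  - intros s t Hs Ht. rewrite gd by lra.
    replace (d p q - s - (d p q - t)) with (t - s) by ring. apply Rabs_minus_sym.
Qed.

End MetricFacts.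

Section Isometries.
Variables (X : Type) (d : X -> X -> R).

Lemma iso_g_dist (g : isometry d) y z : d (iso_g g y) (iso_g g z) = d y z.
Proof. now rewrite <- (iso_dist g), !iso_fg. Qed.

Lemma iso_dist_g_f (g : isometry d) y z : d (iso_g g y) z = d y (iso_f g z).
Proof. now rewrite <- (iso_dist g), iso_fg. Qed.

Definition iso_prod (gs : list (isometry d)) (y : X) : X :=
  fold_right (fun g z => iso_f g z) y gs.

Variable a : isometry d.

Lemma zpow_of_nat n y : zpow a (Z.of_nat n) y = Nat.iter n (iso_f a) y.
Proof.
  destruct n as [|n]; [reflexivity|].
  unfold zpow. cbn [Z.of_nat]. now rewrite SuccNat2Pos.id_succ.
Qed.

Lemma zpow_opp_of_nat n y : zpow a (- Z.of_nat n) y = Nat.iter n (iso_g a) y.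
Proof.
  destruct n as [|n]; [reflexivity|].
  unfold zpow. cbn [Z.of_nat Z.opp]. now rewrite SuccNat2Pos.id_succ.
Qed.

Lemma zpow_succ e y : zpow a (Z.succ e) y = iso_f a (zpow a e y).
Proof.
  destruct (Z_le_gt_dec 0 e) as [He | He].
  - rewrite <- (Z2Nat.id e He), <- Nat2Z.inj_succ, !zpow_of_nat.
    apply Nat.iter_succ.
  - assert (exists n, e = (- Z.of_nat (S n))%Z) as [n ->]
      by (exists (Z.to_nat (- e - 1)); lia).
    replace (Z.succ (- Z.of_nat (S n))) with (- Z.of_nat n)%Z by lia.
    now rewrite !zpow_opp_of_nat, Nat.iter_succ, iso_fg.
Qed.

Lemma zpow_pred e y : zpow a (Z.pred e) y = iso_g a (zpow a e y).
Proof. now rewrite <- (Z.succ_pred e) at 2; rewrite zpow_succ, iso_gf. Qed.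

Lemma zpow_add p q y : zpow a (p + q) y = zpow a p (zpow a q y).
Proof.
  induction p as [|p IH|p IH] using Z.peano_ind.
  - reflexivity.
  - now rewrite Z.add_succ_l, !zpow_succ, IH.
  - now rewrite Z.add_pred_l, !zpow_pred, IH.
Qed.

Lemma zpow_opp_cancel e y : zpow a (- e) (zpow a e y) = y.
Proof. now rewrite <- zpow_add, Z.add_opp_diag_l. Qed.

Lemma zpow_cancel_opp e y : zpow a e (zpow a (- e) y) = y.
Proof. now rewrite <- zpow_add, Z.add_opp_diag_r. Qed.

Lemma zpow_dist e y z : d (zpow a e y) (zpow a e z) = d y z.
Proof.
  induction e as [|e IH|e IH] using Z.peano_ind.
  - reflexivity.
  - now rewrite !zpow_succ, iso_dist.
  - now rewrite !zpow_pred, iso_g_dist.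
Qed.

Definition zpow_isometry (e : Z) : isometry d := {|
  iso_f := zpow a e; iso_g := zpow a (- e);
  iso_fg := zpow_cancel_opp e; iso_gf := zpow_opp_cancel e;
  iso_dist := zpow_dist e |}.

End Isometries.

Section Hyperbolic.
Variables (X : Type) (d : X -> X -> R) (delta : R).
Hypothesis hyp : hyperbolic d delta.
Let metric : is_metric d := proj1 hyp.

Lemma geodesics_fellow_travel w x y gx gy :
  geodesic d gx w x -> geodesic d gy w y ->
  forall t, 0 <= t <= gromov d w x y -> d (gx t) (gy t) <= delta.
Proof.
  pose proof hyp as [_ [geod [_ thin]]]. intros Gx Gy t Ht.
  destruct (geod x y) as [gxy Gxy].
  destruct (thin w x y gx gxy _ Gx Gxy (geodesic_reverse metric Gy)) as [H _].
  specialize (H t Ht). cbv beta in H.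
  rewrite (dist_sym metric y w) in H.
  now replace (d w y - (d w y - t)) with t in H by ring.
Qed.

(* Follow
   geodesics from w to x, y and z up to time m = min((x|y)_w, (y|z)_w): the
   three points reached are pairwise delta-close, so d(x, z) <= d(w, x) - m +
   2 delta + d(w, z) - m. *)
Lemma gromov_four_point w x y z :
  gromov d w x y <= gromov d w x z + delta \/
  gromov d w y z <= gromov d w x z + delta.
Proof.
  pose proof hyp as [_ [geod _]].
  destruct (geod w x) as [gx Gx], (geod w y) as [gy Gy], (geod w z) as [gz Gz].
  assert (key : forall m, 0 <= m -> m <= gromov d w x y -> m <= gromov d w y z ->
                 m <= gromov d w x z + delta).
  { intros m Hm0 Hmxy Hmyz.
    pose proof (gromov_bounds metric w x y). pose proof (gromov_bounds metric w y z).
    pose proof (geodesics_fellow_travel Gx Gy (conj Hm0 Hmxy)) as Txy.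
    pose proof (geodesics_fellow_travel Gy Gz (conj Hm0 Hmyz)) as Tyz.
    destruct Gx as [_ [gx1 gxd]], Gz as [_ [gz1 gzd]].
    assert (Ex : d (gx (d w x)) (gx m) = Rabs (d w x - m)) by (apply gxd; lra).
    assert (Ez : d (gz m) (gz (d w z)) = Rabs (m - d w z)) by (apply gzd; lra).
    rewrite gx1, Rabs_right in Ex by lra. rewrite gz1, Rabs_left1 in Ez by lra.
    pose proof (dist_triangle metric x (gx m) z).
    pose proof (dist_triangle metric (gx m) (gy m) z).
    pose proof (dist_triangle metric (gy m) (gz m) z).
    unfold gromov. lra. }
  destruct (Rle_dec (gromov d w x y) (gromov d w y z));
    [left | right]; apply key; try apply gromov_bounds; auto; lra.
Qed.

Lemma hyperbolic_delta_nonneg (x : X) : 0 <= delta.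
Proof.
  pose proof hyp as [_ [geod [_ thin]]]. destruct (geod x x) as [g G].
  destruct (thin x x x g g g G G G) as [H _].
  assert (H0 : gromov d x x x = 0) by (unfold gromov; rewrite (dist_refl metric); lra).
  specialize (H 0 ltac:(lra)). destruct G as [g0 [g1 _]].
  now rewrite Rminus_0_r, g0, g1, (dist_refl metric) in H.
Qed.

Definition separated (x y z : X) : Prop :=
  d y z > Rmax (d x y) (d x z) + 2 * delta.

Definition pingpong_chain (x : X) (gs : list (isometry d)) : Prop :=
  LocallySorted (fun g h => separated x (iso_g g x) (iso_f h x)) gs.

Lemma separated_sym x y z : separated x y z -> separated x z y.
Proof. unfold separated. now rewrite (dist_sym metric z y), Rmax_comm. Qed.

Lemma separated_dist_pos x y z : separated x y z -> 0 < d x y.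
Proof.
  unfold separated. pose proof (hyperbolic_delta_nonneg x).
  pose proof (Rmax_r (d x y) (d x z)).
  pose proof (dist_triangle metric y x z) as Htri.
  rewrite (dist_sym metric y x) in Htri. lra.
Qed.

Lemma separated_gromov x y z :
  separated x y z -> gromov d x y z + delta < Rmin (d x y) (d x z) / 2.
Proof.
  unfold separated, gromov, Rmin, Rmax. destruct (Rle_dec (d x y) (d x z)); lra.
Qed.

Variable x : X.

Lemma pingpong_escape gs : forall g z, pingpong_chain x (g :: gs) ->
  gromov d x z (iso_f g x) < d x (iso_f g x) / 2 -> d z x < d z (iso_prod (g :: gs) x).
Proof.
  induction gs as [|h gs IH]; intros g z Hc Hz.
  { exact (dist_lt_of_gromov_lt_half metric Hz). }
  inversion_clear Hc as [| |? ? ? Hc' Hgh].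
  set (u := iso_g g x) in Hgh. set (z' := iso_g g z).
  pose proof (separated_gromov Hgh) as Hu.
  pose proof (Rmin_l (d x u) (d x (iso_f h x))). pose proof (Rmin_r (d x u) (d x (iso_f h x))).
  (* g^-1 maps (x, z, g x) to (u, z', x), turning the hypothesis on z into a
     lower bound on (u|z')_x; the four-point condition then forces z' out of
     the shadow of h x. *)
  assert (Hux : d x u = d x (iso_f g x))
    by (unfold u; now rewrite (dist_sym metric), iso_dist_g_f).
  assert (Hxz' : d x z' = d z (iso_f g x))
    by (unfold z'; now rewrite (dist_sym metric), iso_dist_g_f).
  assert (Huz' : d u z' = d x z) by apply iso_g_dist.
  assert (Hz' : gromov d x z' (iso_f h x) < d x (iso_f h x) / 2).
  { pose proof (gromov_four_point x u z' (iso_f h x)).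
    pose proof (dist_sym metric (iso_f g x) z).
    unfold gromov in *. lra. }
  specialize (IH h z' Hc' Hz').
  change (iso_prod (g :: h :: gs) x) with (iso_f g (iso_prod (h :: gs) x)).
  rewrite <- iso_dist_g_f. fold z'.
  pose proof (dist_lt_of_gromov_lt_half metric Hz).
  rewrite (dist_sym metric z' x), Hxz' in IH. lra.
Qed.

Lemma pingpong_shadow gs : forall g, pingpong_chain x (g :: gs) ->
  d x (iso_f g x) / 2 <= gromov d x (iso_prod (g :: gs) x) (iso_f g x).
Proof.
  induction gs as [|h gs IH]; intros g Hc.
  { pose proof (dist_nonneg metric x (iso_f g x)).
    unfold gromov. simpl. rewrite (dist_refl metric). lra. }
  inversion_clear Hc as [| |? ? ? Hc' Hgh].
  specialize (IH h Hc').
  set (p := iso_prod (h :: gs) x) in IH. set (u := iso_g g x) in Hgh.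
  pose proof (separated_gromov Hgh) as Hu.
  pose proof (Rmin_l (d x u) (d x (iso_f h x))). pose proof (Rmin_r (d x u) (d x (iso_f h x))).
  assert (Hux : d x u = d x (iso_f g x))
    by (unfold u; now rewrite (dist_sym metric), iso_dist_g_f).
  assert (Hxgp : d x (iso_f g p) = d u p) by (unfold u; now rewrite iso_dist_g_f).
  assert (Hgpg : d (iso_f g p) (iso_f g x) = d x p)
    by (rewrite iso_dist; apply (dist_sym metric)).
  change (iso_prod (g :: h :: gs) x) with (iso_f g p).
  (* (g p | g x)_x = d(x, g x) - (u|p)_x, and (u|p)_x is small by the
     four-point condition because p lies in the shadow of h x while u does
     not. *)
  pose proof (gromov_four_point x u p (iso_f h x)).
  unfold gromov in *. lra.
Qed.

Lemma pingpong_not_fixed g gs :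
  pingpong_chain x (g :: gs) -> 0 < d x (iso_f g x) -> iso_prod (g :: gs) x <> x.
Proof.
  intros Hc Hpos Hfix.
  assert (Hx : gromov d x x (iso_f g x) < d x (iso_f g x) / 2)
    by (unfold gromov; rewrite (dist_refl metric); lra).
  pose proof (pingpong_escape Hc Hx) as H. rewrite Hfix in H. exact (Rlt_irrefl _ H).
Qed.

Lemma pingpong_separates g gs h hs :
  pingpong_chain x (g :: gs) -> pingpong_chain x (h :: hs) ->
  separated x (iso_f g x) (iso_f h x) -> iso_prod (g :: gs) x <> iso_prod (h :: hs) x.
Proof.
  intros Hg Hh Hgh Heq.
  pose proof (pingpong_shadow Hg) as Hshadow.
  set (p := iso_prod (g :: gs) x) in *.
  pose proof (separated_gromov Hgh) as Hsep.
  pose proof (Rmin_l (d x (iso_f g x)) (d x (iso_f h x))).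
  pose proof (Rmin_r (d x (iso_f g x)) (d x (iso_f h x))).
  assert (Hp : gromov d x p (iso_f h x) < d x (iso_f h x) / 2).
  { pose proof (gromov_four_point x (iso_f g x) p (iso_f h x)).
    unfold gromov in *. rewrite (dist_sym metric (iso_f g x) p) in *. lra. }
  pose proof (pingpong_escape Hh Hp) as Hfar. rewrite <- Heq, (dist_refl metric) in Hfar.
  pose proof (dist_nonneg metric p x). lra.
Qed.

End Hyperbolic.

Lemma LocallySorted_map_Forall (A B : Type) (f : A -> B) (P : A -> Prop)
    (Ra : A -> A -> Prop) (Rb : B -> B -> Prop) l :
  (forall u v, P u -> P v -> Ra u v -> Rb (f u) (f v)) ->
  Forall P l -> LocallySorted Ra l -> LocallySorted Rb (map f l).
Proof.
  intros H HP HR. induction HR as [|u|u v l HR IH Huv]; simpl; constructor.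
  - apply IH. exact (Forall_inv_tail HP).
  - apply H; [exact (Forall_inv HP) | exact (Forall_inv (Forall_inv_tail HP)) | exact Huv].
Qed.

Section Syllables.

Definition letter_exp (i : bool) : Z := if i then (-1)%Z else 1%Z.

(* A word is read as its list of maximal blocks of equal generators, each
   recorded as (generator, total exponent). *)
Definition cons_letter (l : bool * bool) (s : list (bool * Z)) : list (bool * Z) :=
  let (c, i) := l in
  match s with
  | (c', e) :: s' =>
      if Bool.eqb c c' then (c, letter_exp i + e)%Z :: s' else (c, letter_exp i) :: s
  | nil => (c, letter_exp i) :: nil
  end.

Fixpoint syllables (w : list (bool * bool)) : list (bool * Z) :=
  match w with
  | nil => nil
  | l :: w' => cons_letter l (syllables w')
  end.

Definition alternating (s : list (bool * Z)) : Prop :=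
  LocallySorted (fun u v => fst u <> fst v) s.

Lemma syllables_head c i w : exists e s, syllables ((c, i) :: w) = (c, e) :: s.
Proof.
  simpl. destruct (syllables w) as [|[c' e] s]; [eauto|].
  destruct (Bool.eqb c c'); eauto.
Qed.

Lemma alternating_syllables w : alternating (syllables w).
Proof.
  induction w as [|[c i] w IH]; [constructor|]. simpl.
  destruct (syllables w) as [|[c' e] s]; [constructor|].
  destruct (Bool.eqb_spec c c') as [<-|Hne].
  - inversion_clear IH; constructor; assumption.
  - constructor; assumption.
Qed.

Lemma syllables_reduced_cons c i w : reduced ((c, i) :: w) ->
  exists e s, syllables ((c, i) :: w) = (c, e) :: s /\
    (0 < letter_exp i * e)%Z /\ Forall (fun t => snd t <> 0%Z) s.
Proof.
  revert c i. induction w as [|[c' i'] w IH]; intros c i [Hcancel Hred].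
  { exists (letter_exp i), nil.
    split; [reflexivity | split; [destruct i; simpl; lia | constructor]]. }
  destruct (IH c' i' Hred) as [e [s [Hs [He Hnz]]]].
  change (syllables ((c, i) :: (c', i') :: w))
    with (cons_letter (c, i) (syllables ((c', i') :: w))).
  rewrite Hs. cbn [cons_letter]. destruct (Bool.eqb_spec c c') as [<-|Hne].
  - assert (i = i') as <- by (destruct i, i'; simpl in Hcancel; tauto).
    exists (letter_exp i + e)%Z, s.
    split; [reflexivity | split; [destruct i; cbn [letter_exp] in *; lia | exact Hnz]].
  - exists (letter_exp i), ((c', e) :: s).
    split; [reflexivity | split; [destruct i; cbn [letter_exp]; lia |]].
    constructor; [destruct i'; cbn [letter_exp snd] in *; lia | exact Hnz].
Qed.

Lemma syllables_reduced w : reduced w -> Forall (fun t => snd t <> 0%Z) (syllables w).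
Proof.
  destruct w as [|[c i] w]; intros Hred; [constructor|].
  destruct (syllables_reduced_cons Hred) as [e [s [-> [He Hnz]]]].
  constructor; [cbn [snd]; destruct i; cbn [letter_exp] in He; lia | exact Hnz].
Qed.

Lemma syllables_positive w :
  Forall (fun t => (0 < snd t)%Z) (syllables (map (fun c => (c, false)) w)).
Proof.
  induction w as [|c w IH]; [constructor|]. cbn [map syllables].
  destruct (syllables (map (fun c => (c, false)) w)) as [|[c' e] s].
  - constructor; [cbn; lia | constructor].
  - inversion_clear IH as [|? ? He Hs]. cbn [snd] in He. cbn [cons_letter].
    destruct (Bool.eqb c c'); constructor; cbn [snd letter_exp]; try lia; auto.
Qed.

Variables (X : Type) (d : X -> X -> R) (a b : isometry d).

Definition generator (c : bool) : isometry d := if c then a else b.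

Definition syllable (s : bool * Z) : isometry d :=
  zpow_isometry (generator (fst s)) (snd s).

Lemma eval_word_syllables w y :
  eval_word a b w y = iso_prod (map syllable (syllables w)) y.
Proof.
  induction w as [|[c i] w IH]; [reflexivity|].
  change (eval_word a b ((c, i) :: w) y) with (letter_map a b (c, i) (eval_word a b w y)).
  replace (letter_map a b (c, i)) with (zpow (generator c) (letter_exp i))
    by (destruct c, i; reflexivity).
  rewrite IH. simpl. destruct (syllables w) as [|[c' e] s]; [reflexivity|].
  destruct (Bool.eqb_spec c c') as [<-|Hne]; simpl; [symmetry; apply zpow_add | reflexivity].
Qed.

Lemma eval_pos_word_eval_word w y :
  eval_pos_word a b w y = eval_word a b (map (fun c => (c, false)) w) y.
Proof.
  induction w as [|c w IH]; [reflexivity|].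
  unfold eval_pos_word, eval_word in *. cbn [fold_right map].
  rewrite IH. now destruct c.
Qed.

End Syllables.

Section PingPongSyllables.
Variables (X : Type) (d : X -> X -> R) (delta : R) (a b : isometry d) (x : X).
Variable P : Z -> Prop.
Hypothesis hyp : hyperbolic d delta.
(* Consecutive syllables a^p, b^q or b^q, a^p are compared through a^-p x and
   b^q x, resp. b^-q x and a^p x. *)
Hypothesis sep : forall p q, P p -> P q ->
  separated d delta x (zpow a (- p) x) (zpow b q x) /\
  separated d delta x (zpow a p x) (zpow b (- q) x).

Lemma syllable_moves_basepoint s : P (snd s) -> 0 < d x (iso_f (syllable a b s) x).
Proof.
  destruct s as [[|] e]; simpl; intros He; destruct (sep He He) as [Hl Hr].
  - exact (separated_dist_pos hyp Hr).
  - exact (separated_dist_pos hyp (separated_sym hyp Hl)).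
Qed.

Lemma syllables_pingpong_chain s : Forall (fun t => P (snd t)) s -> alternating s ->
  pingpong_chain delta x (map (syllable a b) s).
Proof.
  apply LocallySorted_map_Forall. intros [[|] p] [[|] q] Hp Hq Hpq; simpl in *.
  - congruence.
  - exact (proj1 (sep Hp Hq)).
  - exact (separated_sym hyp (proj2 (sep Hq Hp))).
  - congruence.
Qed.

Lemma syllables_not_fixed s : s <> nil -> Forall (fun t => P (snd t)) s -> alternating s ->
  iso_prod (map (syllable a b) s) x <> x.
Proof.
  destruct s as [|t s]; intros Hs HP Halt; [congruence|].
  apply (pingpong_not_fixed hyp).
  - exact (syllables_pingpong_chain HP Halt).
  - exact (syllable_moves_basepoint _ (Forall_inv HP)).
Qed.

End PingPongSyllables.

Section Freeness.
Variables (X : Type) (d : X -> X -> R) (delta : R) (a b : isometry d) (x : X).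
Hypothesis hyp : hyperbolic d delta.

Lemma reduced_word_moves_basepoint :
  (forall p q, p <> 0%Z -> q <> 0%Z -> separated d delta x (zpow a p x) (zpow b q x)) ->
  forall w, w <> nil -> reduced w -> eval_word a b w x <> x.
Proof.
  intros Hsep [|[c i] w] Hw Hred; [congruence|].
  rewrite eval_word_syllables.
  apply (syllables_not_fixed a b (fun e => e <> 0%Z) hyp).
  - intros p q Hp Hq. split; apply Hsep; lia.
  - destruct (syllables_head c i w) as [e [s ->]]. discriminate.
  - exact (syllables_reduced _ Hred).
  - apply alternating_syllables.
Qed.

Hypothesis pos_sep : forall p q, (0 < p)%Z -> (0 < q)%Z ->
  separated d delta x (zpow a (- p) x) (zpow b q x) /\
  separated d delta x (zpow a p x) (zpow b (- q) x).

Lemma positive_word_moves_basepoint c w : eval_pos_word a b (c :: w) x <> x.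
Proof.
  rewrite eval_pos_word_eval_word, eval_word_syllables.
  apply (syllables_not_fixed a b _ hyp pos_sep).
  - destruct (syllables_head c false (map (fun c => (c, false)) w)) as [e [s Hs]].
    cbn [map]. rewrite Hs. discriminate.
  - apply syllables_positive.
  - apply alternating_syllables.
Qed.

Lemma positive_words_separate :
  (forall p q, (0 < p)%Z -> (0 < q)%Z -> separated d delta x (zpow a p x) (zpow b q x)) ->
  forall w1 w2, eval_pos_word a b (true :: w1) x <> eval_pos_word a b (false :: w2) x.
Proof.
  intros Hsep w1 w2. rewrite !eval_pos_word_eval_word, !eval_word_syllables.
  pose proof (syllables_positive (true :: w1)) as Hpos1.
  pose proof (syllables_positive (false :: w2)) as Hpos2.
  pose proof (alternating_syllables (map (fun c => (c, false)) (true :: w1))) as Halt1.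
  pose proof (alternating_syllables (map (fun c => (c, false)) (false :: w2))) as Halt2.
  cbn [map] in *.
  destruct (syllables_head true false (map (fun c => (c, false)) w1)) as [e1 [s1 Hs1]].
  destruct (syllables_head false false (map (fun c => (c, false)) w2)) as [e2 [s2 Hs2]].
  rewrite Hs1 in *; rewrite Hs2 in *.
  apply (pingpong_separates hyp).
  - exact (syllables_pingpong_chain a b _ hyp pos_sep Hpos1 Halt1).
  - exact (syllables_pingpong_chain a b _ hyp pos_sep Hpos2 Halt2).
  - exact (Hsep _ _ (Forall_inv Hpos1) (Forall_inv Hpos2)).
Qed.

End Freeness.

Lemma free_semigroup_of_separating (X : Type) (d : X -> X -> R) (a b : isometry d) (x : X) :
  (forall c w, eval_pos_word a b (c :: w) x <> x) ->
  (forall w1 w2, eval_pos_word a b (true :: w1) x <> eval_pos_word a b (false :: w2) x) ->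
  free_semigroup a b.
Proof.
  intros Hfix Hsep w1 w2 _ _ Hne Heq. specialize (Heq x). revert w2 Hne Heq.
  induction w1 as [|c1 w1 IH]; intros [|c2 w2] Hne Heq.
  - congruence.
  - exact (Hfix c2 w2 (eq_sym Heq)).
  - exact (Hfix c1 w1 Heq).
  - destruct (Bool.eqb_spec c1 c2) as [<-|Hc].
    + apply (IH w2); [congruence|].
      apply (f_equal (iso_g (generator a b c1))) in Heq.
      destruct c1; simpl in Heq; rewrite !iso_gf in Heq; exact Heq.
    + destruct c1, c2; try congruence.
      * exact (Hsep _ _ Heq).
      * exact (Hsep _ _ (eq_sym Heq)).
Qed.

Theorem proposition6p5 (X : Type) (d : X -> X -> R) (delta : R)
  (a b : isometry d) :
  hyperbolic d delta ->
  ((exists x : X, forall p q : Z, p <> 0%Z -> q <> 0%Z ->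
      d (zpow a p x) (zpow b q x) > Rmax (d x (zpow a p x)) (d x (zpow b q x)) + 2 * delta) ->
    freely_generates_group a b) /\
  ((exists x : X, forall p q : Z, p <> 0%Z -> q <> 0%Z -> ~ (p < 0 /\ q < 0)%Z ->
      d (zpow a p x) (zpow b q x) > Rmax (d x (zpow a p x)) (d x (zpow b q x)) + 2 * delta) ->
    free_semigroup a b).
Proof.
  intros hyp. split.
  - intros [x Hx] w Hw Hred Hid.
    exact (reduced_word_moves_basepoint a b hyp Hx Hw Hred (Hid x)).
  - intros [x Hx].
    assert (pos_sep : forall p q, (0 < p)%Z -> (0 < q)%Z ->
      separated d delta x (zpow a (- p) x) (zpow b q x) /\
      separated d delta x (zpow a p x) (zpow b (- q) x))
      by (intros p q Hp Hq; split; apply Hx; lia).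
    apply (free_semigroup_of_separating a b (x := x)).
    + exact (positive_word_moves_basepoint a b hyp pos_sep).
    + apply (positive_words_separate a b hyp pos_sep).
      intros p q Hp Hq. apply Hx; lia.
Qed.
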